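(* Let $d\ge1$, $G\le S_d$, $n\ge 0$. Then $\mathscr{P}^G_n$ is spanned by the tensors $\delta_Q$, where $Q$ ranges over set partitions of $\{1,\dots,n\}$, together with the tensors $T_P(S)$, where $P$ ranges over set partitions of the disjoint union $\{a_1,\dots,a_d\}\sqcup\{b_1,\dots,b_n\}$. Here $\delta_Q=\sum_{\vec j} e_{\vec j}$, summed over $\vec j\in[d]^n$ with $j_s=j_t$ whenever $s,t$ lie in a common block of $Q$, and $T_P(S)=\sum_{\vec j\in[d]^n}\Big(\sum_{\vec k\in[d]^d} S_{\vec k}\,\chi_P(\vec k,\vec j)\Big)e_{\vec j}$, where $\chi_P(\vec k,\vec j)=1$ if the labelling $a_s\mapsto k_s$, $b_t\mapsto j_t$ is constant on each block of $P$, and $\chi_P(\vec k,\vec j)=0$ otherwise. (For $n=0$, $\mathscr{P}^G_0=\mathbb{C}$ and $\delta_\emptyset=1$.)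
   Context: $V=\mathbb{C}^d$ with basis $e_1,\dots,e_d$; $\mathscr{P}_0=\mathbb{C}$, $\mathscr{P}_n=V^{\otimes n}$, $e_{\vec j}=e_{j_1}\otimes\cdots\otimes e_{j_n}$. A subgroup $G\le S_d$ acts by $g\cdot e_i=e_{g(i)}$, diagonally on tensor powers; $\mathscr{P}^G_n$ is the subspace of $G$-fixed vectors in $\mathscr{P}_n$. The molecule is $S=\sum_{g\in G}e_{g(1)}\otimes\cdots\otimes e_{g(d)}=\sum_{\vec k\in[d]^d}S_{\vec k}e_{\vec k}$. *)

From HB Require Import structures.
From mathcomp Require Import all_boot all_order all_algebra all_fingroup all_field.
Set Implicit Arguments. Unset Strict Implicit. Unset Printing Implicit Defensive.
Import GRing.Theory Num.Theory.
Local Open Scope ring_scope.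

(* Multi-indices j in [d]^n, and tensors in P_n = (C^d)^{(x) n}, given by
   their coordinates in the basis e_j. C is modelled by algC. *)
Definition mindex (d n : nat) := {ffun 'I_n -> 'I_d}.
Definition tensor (d n : nat) := {ffun mindex d n -> algC}.

(* G-fixed tensors: g . (sum_j T_j e_j) = sum_j T_j e_{g o j}, so T is fixed
   iff T_{g o j} = T_j for all g in G and all j. *)
Definition fixed_tensor (d n : nat) (G : {group {perm 'I_d}}) (T : tensor d n) :=
  forall g, g \in G -> forall j : mindex d n, T [ffun i => g (j i)] = T j.

Definition const_on_blocks (X : finType) (Y : eqType) (Q : {set {set X}}) (f : X -> Y) :=
  [forall B in Q, forall s in B, forall t in B, f s == f t].

Definition delta (d n : nat) (Q : {set {set 'I_n}}) : tensor d n :=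
  [ffun j : mindex d n => if const_on_blocks Q j then 1 else 0].

(* The molecule S = sum_{g in G} e_{g(1)} (x) ... (x) e_{g(d)} *)
Definition molecule (d : nat) (G : {group {perm 'I_d}}) : tensor d d :=
  [ffun k : mindex d d => \sum_(g in G) (if [forall i, k i == g i] then 1 else 0)].

Definition labelling (d n : nat) (k : mindex d d) (j : mindex d n)
  (x : ('I_d + 'I_n)%type) : 'I_d :=
  match x with inl s => k s | inr t => j t end.

Definition chi (d n : nat) (P : {set {set ('I_d + 'I_n)%type}})
  (k : mindex d d) (j : mindex d n) : algC :=
  if const_on_blocks P (labelling k j) then 1 else 0.

Definition TP (d n : nat) (P : {set {set ('I_d + 'I_n)%type}}) (S : tensor d d)
  : tensor d n :=
  [ffun j : mindex d n => \sum_(k : mindex d d) S k * chi P k j].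

From HB Require Import structures.
From mathcomp Require Import all_boot all_order all_algebra all_fingroup all_field.
Import GRing.Theory Num.Theory.
Local Open Scope ring_scope.
Set Implicit Arguments. Unset Strict Implicit.

(* Only the tensors [T_P(S)] are needed.  A multi-index [j] determines the
   partition [P_j] of {a_1..a_d} + {b_1..b_n} into the fibres of
   a_s |-> s, b_t |-> j_t; then [T_{P_j}(S)] is the indicator of the G-orbit of
   [j] weighted by stabiliser sizes, namely [T_{P_j}(S)_j' = #{g in G | g o j = j'}].
   Averaging, a G-fixed [T] equals [|G|^-1 sum_j T_j T_{P_j}(S)], and grouping
   the [j] by [P_j] gives the required combination. *)

Lemma const_on_preim_partition (X : finType) (Y Z : eqType) (f : X -> Y) (L : X -> Z) :
  const_on_blocks (preim_partition f setT) L =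
  [forall x, forall y, (f x == f y) ==> (L x == L y)].
Proof.
apply/forall_inP/forallP => [blockL x|fibreL B /imsetP[z _ ->]].
  apply/forallP => y; apply/implyP => fxy.
  have /blockL/forall_inP/(_ x) : [set z in setT | f x == f z] \in preim_partition f setT.
    by apply: imset_f; rewrite inE.
  rewrite !inE eqxx => /(_ isT)/forall_inP/(_ y).
  by rewrite !inE fxy => /(_ isT).
apply/forall_inP => s; rewrite inE => /andP[_ /eqP fzs].
apply/forall_inP => t; rewrite inE => /andP[_ /eqP fzt].
by have /forallP/(_ t) := fibreL s; rewrite -fzs -fzt eqxx.
Qed.

Lemma const_on_blocks_inj (X : finType) (Y Z : eqType) (Q : {set {set X}})
    (f : Y -> Z) (L : X -> Y) (L' : X -> Z) :
  injective f -> (forall x, L' x = f (L x)) ->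
  const_on_blocks Q L' = const_on_blocks Q L.
Proof.
move=> injf L'E; apply: eq_forallb_in => B _; apply: eq_forallb_in => s _.
by apply: eq_forallb_in => t _; rewrite !L'E (inj_eq injf).
Qed.

Lemma delta_fixed d n (G : {group {perm 'I_d}}) (Q : {set {set 'I_n}}) :
  fixed_tensor G (delta d Q).
Proof.
move=> g _ j; rewrite !ffunE (@const_on_blocks_inj _ _ _ _ g j) //.
  exact: perm_inj.
by move=> x; rewrite ffunE.
Qed.

Section Molecule.

Variables (d n : nat) (G : {group {perm 'I_d}}).

Definition perm_mindex (g : {perm 'I_d}) : mindex d d := [ffun i => g i].

Definition act_mindex (g : {perm 'I_d}) (j : mindex d n) : mindex d n :=
  [ffun i => g (j i)].

Definition kernel_partition (j : mindex d n) : {set {set ('I_d + 'I_n)%type}} :=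
  preim_partition (labelling (perm_mindex 1) j) setT.

Lemma TP_molecule P (j : mindex d n) :
  TP P (molecule G) j = \sum_(g in G) chi P (perm_mindex g) j.
Proof.
rewrite ffunE; under eq_bigr do rewrite ffunE big_distrl.
rewrite exchange_big /=; apply: eq_bigr => g _.
have eq_pm (k : mindex d d) : [forall i, k i == g i] = (k == perm_mindex g).
  apply/forallP/eqP => [kg|->]; last by move=> i; rewrite ffunE.
  by apply/ffunP => i; rewrite ffunE; apply/eqP.
rewrite (bigD1 (perm_mindex g)) //= eq_pm eqxx mul1r big1 ?addr0 // => k /negbTE nk.
by rewrite eq_pm nk mul0r.
Qed.

Lemma TP_molecule_fixed P : fixed_tensor G (TP P (molecule G) : tensor d n).
Proof.
move=> g gG j; rewrite !TP_molecule (reindex_inj (mulIg g)) /=.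
apply: eq_big => [h|h _]; first by rewrite groupMr.
rewrite /chi (@const_on_blocks_inj _ _ _ _ g (labelling (perm_mindex h) j)) //.
  exact: perm_inj.
by case=> x /=; rewrite !ffunE // permM.
Qed.

Lemma chi_kernel_partition (j j' : mindex d n) g :
  chi (kernel_partition j) (perm_mindex g) j' = if act_mindex g j == j' then 1 else 0.
Proof.
rewrite /chi /kernel_partition const_on_preim_partition; congr (if _ then _ else _).
have labelE z : labelling (perm_mindex g) (act_mindex g j) z =
                g (labelling (perm_mindex 1) j z).
  by case: z => z /=; rewrite !ffunE ?perm1.
apply/forallP/eqP => [fibre_j'|<- x]; last first.
  by apply/forallP => y; apply/implyP => /eqP fxy; rewrite !labelE fxy.
apply/ffunP => t; rewrite ffunE.
have /forallP/(_ (inl (j t))) := fibre_j' (inr t).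
by rewrite /= !ffunE perm1 eqxx /= => /eqP.
Qed.

Lemma act_mindexV_eq g (j j' : mindex d n) :
  (act_mindex g j == j') = (j == act_mindex g^-1 j').
Proof.
by apply/eqP/eqP => [<-|->]; apply/ffunP => i; rewrite !ffunE ?permK ?permKV.
Qed.

Lemma fixed_tensor_average (T : tensor d n) (j' : mindex d n) :
  fixed_tensor G T ->
  \sum_j T j * TP (kernel_partition j) (molecule G) j' = T j' *+ #|G|.
Proof.
move=> fixT; under eq_bigr do rewrite TP_molecule big_distrr.
rewrite exchange_big /= -sumr_const; apply: eq_bigr => g gG.
under eq_bigr do rewrite chi_kernel_partition act_mindexV_eq (fun_if (GRing.mul _)) mulr1 mulr0.
by rewrite -big_mkcond big_pred1_eq fixT ?groupV.
Qed.

Lemma sum_TP_kernel_partition (F : mindex d n -> algC) (j' : mindex d n) :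
  \sum_(P | partition P [set: ('I_d + 'I_n)%type])
     (\sum_(j | kernel_partition j == P) F j) * TP P (molecule G) j' =
  \sum_j F j * TP (kernel_partition j) (molecule G) j'.
Proof.
rewrite [RHS](partition_big kernel_partition
  (fun P => partition P [set: ('I_d + 'I_n)%type])) /=; last first.
  by move=> j _; exact: preim_partitionP.
apply: eq_bigr => P _; rewrite mulr_suml.
by apply: eq_bigr => j /eqP <-.
Qed.

End Molecule.

Theorem theorem4p3 (d : nat) (G : {group {perm 'I_d}}) (n : nat) :
  (0 < d)%N ->
  (* every generator lies in P^G_n *)
  ((forall Q : {set {set 'I_n}}, partition Q [set: 'I_n] ->
      fixed_tensor G (delta d Q)) /\
   (forall P : {set {set ('I_d + 'I_n)%type}}, partition P [set: ('I_d + 'I_n)%type] ->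
      fixed_tensor G (TP P (molecule G)))) /\
  (* and every element of P^G_n is a linear combination of them *)
  (forall T : tensor d n, fixed_tensor G T ->
     exists (c : {set {set 'I_n}} -> algC)
            (c' : {set {set ('I_d + 'I_n)%type}} -> algC),
       forall j : mindex d n,
         T j = \sum_(Q | partition Q [set: 'I_n]) c Q * delta d Q j
             + \sum_(P | partition P [set: ('I_d + 'I_n)%type])
                  c' P * TP P (molecule G) j).
Proof.
move=> _; split; first by split=> ? _; [exact: delta_fixed | exact: TP_molecule_fixed].
move=> T fixT.
exists (fun _ => 0), (fun P => #|G|%:R^-1 * \sum_(j | kernel_partition j == P) T j) => j'.
rewrite big1 ?add0r => [|Q _]; last by rewrite mul0r.
under eq_bigr => P _ do rewrite -mulrA.
rewrite -mulr_sumr sum_TP_kernel_partition fixed_tensor_average //.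
by rewrite -[T j' *+ _]mulr_natl mulrA mulVf ?mul1r // pnatr_eq0 -lt0n cardG_gt0.
Qed.
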